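(* Assume hypotheses (A) and (B) and suppose the routing matrix $P$ has a branching structure, i.e. for every $i\in\{1,\dots,d\}$ the set $\{j\in\{1,\dots,d\}:p_{ji}>0\}$ has at most one element. Then for every $\varepsilon>0$ and every $\rho=(\rho_1,\dots,\rho_d)$ with $(\rho P)_i<\rho_i$ for all $i$, the vector $\gamma$ with $\gamma_i=\varepsilon G_{ii}/\rho_i$ ($i=1,\dots,d$) belongs to $\Gamma$.
   Context: Jackson network with $d$ queues: arrival rates $\lambda_i\ge0$, service rates $\mu_i>0$, routing matrix $P=(p_{ij})_{i,j=1}^d$ nonnegative with $p_{ii}=0$, $\sum_jp_{ij}\le1$, $p_{i0}=1-\sum_jp_{ij}$. Hypothesis (A): the jump-rate kernel on $\mathbb{Z}^d$ (jumps $+\epsilon^i$ at rate $\lambda_i$, $-\epsilon^i$ at rate $\mu_ip_{i0}$, $\epsilon^j-\epsilon^i$ at rate $\mu_ip_{ij}$) is irreducible, equivalently spectral radius of $P$ $<1$ and for every $i$ there are $n,j$ with $\lambda_jp^{(n)}_{ji}>0$; the traffic equations $\nu_j=\lambda_j+\sum_i\nu_ip_{ij}$ then have a unique solution with $\nu_i>0$. Hypothesis (B): $\nu_i<\mu_i$ for all $i$. $G=(I-P)^{-1}$, $(\rho P)_i=\sum_j\rho_jp_{ji}$. $Q_{ij}$: probability that the chain on $\{0,\dots,d\}$ with transitions $p_{ij}$ ($0$ absorbing) started at $i$ ever visits $j$ (time $0$ included). For $\gamma\in\mathbb{R}_+^d$, $\overrightarrow{\gamma_i}$ has components $\gamma_i^j=\log(1+Q_{ji}\gamma_i)$;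 $\Gamma$ is the set of $\gamma\in\mathbb{R}_+^d$ such that for every $i$ and nonzero $v\in\mathbb{R}_+^d$ with $v^i=0$, $\overrightarrow{\gamma_i}\cdot v<\max_j\overrightarrow{\gamma_j}\cdot v$. *)

From HB Require Import structures.
From mathcomp Require Import all_boot all_order all_algebra.
From mathcomp Require Import all_classical all_reals all_analysis.
Set Implicit Arguments. Unset Strict Implicit. Unset Printing Implicit Defensive.
Import Order.TTheory GRing.Theory Num.Theory numFieldNormedType.Exports.
Local Open Scope ring_scope.

Section Jackson.
Variables (R : realType) (d : nat).

Definition pexit (P : 'M[R]_d) (i : 'I_d) : R := 1 - \sum_(j < d) P i j.

Definition jackson_data (lam mu : 'I_d -> R) (P : 'M[R]_d) : Prop :=
  (forall i, 0 <= lam i) /\ (forall i, 0 < mu i) /\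
  (forall i j, 0 <= P i j) /\ (forall i, P i i = 0) /\
  (forall i, \sum_(j < d) P i j <= 1).

Definition evec (i : 'I_d) : 'rV[int]_d := delta_mx 0 i.

Definition is_jump (lam mu : 'I_d -> R) (P : 'M[R]_d) (z : 'rV[int]_d) : Prop :=
  exists i, (z = evec i /\ 0 < lam i)
         \/ (z = - evec i /\ 0 < mu i * pexit P i)
         \/ (exists j, z = evec j - evec i /\ 0 < mu i * P i j).

Definition hypA (lam mu : 'I_d -> R) (P : 'M[R]_d) : Prop :=
  forall x y : 'rV[int]_d, exists s : seq 'rV[int]_d,
    (forall z, z \in s -> is_jump lam mu P z) /\ x + \sum_(z <- s) z = y.

Definition traffic (lam : 'I_d -> R) (P : 'M[R]_d) (nu : 'I_d -> R) : Prop :=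
  forall j, nu j = lam j + \sum_(i < d) nu i * P i j.

(* Hypothesis (B): the (unique under (A)) solution of the traffic equations
   satisfies nu_i < mu_i. *)
Definition hypB (lam mu : 'I_d -> R) (P : 'M[R]_d) : Prop :=
  forall nu, traffic lam P nu -> forall i, nu i < mu i.

Definition branching (P : 'M[R]_d) : Prop :=
  forall i j k : 'I_d, 0 < P j i -> 0 < P k i -> j = k.

Definition Gmx (P : 'M[R]_d) : 'M[R]_d := invmx (1%:M - P).

(* Chain on {0,...,d}: state None = 0 (absorbing), Some i = queue i. *)
Definition ptrans (P : 'M[R]_d) (x y : option 'I_d) : R :=
  match x, y with
  | None, None => 1
  | None, Some _ => 0
  | Some i, None => pexit P i
  | Some i, Some j => P i j
  end.

(* probability, starting at x, of visiting state (Some j) within n steps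
   (time 0 included), by first-step analysis *)
Fixpoint hitn (P : 'M[R]_d) (j : 'I_d) (n : nat) (x : option 'I_d) : R :=
  if x == Some j then 1 else
  match n with
  | 0 => 0
  | n'.+1 => \sum_(y : option 'I_d) ptrans P x y * hitn P j n' y
  end.

Definition Qhit (P : 'M[R]_d) (i j : 'I_d) : R :=
  limn (fun n => hitn P j n (Some i)).

Definition garrow (P : 'M[R]_d) (gamma : 'I_d -> R) (i : 'I_d) : 'I_d -> R :=
  fun j => ln (1 + Qhit P j i * gamma i).

Definition dotv (a v : 'I_d -> R) : R := \sum_(k < d) a k * v k.

Definition Gamma_set (P : 'M[R]_d) (gamma : 'I_d -> R) : Prop :=
  (forall i, 0 <= gamma i) /\
  forall (i : 'I_d) (v : 'I_d -> R),
    (forall k, 0 <= v k) -> (exists k, v k != 0) -> v i = 0 ->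
    dotv (garrow P gamma i) v <
      \big[Num.max/dotv (garrow P gamma i) v]_(j < d) dotv (garrow P gamma j) v.

End Jackson.

From HB Require Import structures.
From mathcomp Require Import all_boot all_order all_algebra.
From mathcomp Require Import all_classical all_reals all_analysis.
From mathcomp Require Import ring.
Import Order.TTheory GRing.Theory Num.Theory numFieldNormedType.Exports.
Local Open Scope ring_scope.

(* Both the column [G_{.i}] and the hitting probabilities [Q_{.i}] solve
   [x = P x] away from [i], and a strictly excessive [rho] makes the only
   solution of [x = P x] vanish; hence [Q_{ki} G_{ii} = G_{ki}], i.e. the
   [k]-th entry of [arrow gamma_i] is [log (1 + eps G_{ki} / rho_i)].
   Take [v >= 0] with [v_i = 0].  If some [k] in the support of [v] reaches
   the unique parent [m] of [i], then [G_{ki} = G_{km} p_{mi}] for [k <> i] and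
   [rho_m p_{mi} < rho_i] make [arrow gamma_m . v > arrow gamma_i . v].
   Otherwise [G_{ki} = 0] on the support of [v], so [arrow gamma_i . v = 0],
   which any [j] in the support of [v] beats. *)

Lemma sumr_option (V : nmodType) (T : finType) (F : option T -> V) :
  \sum_(y : option T) F y = F None + \sum_(k : T) F (Some k).
Proof.
rewrite (bigD1 None) //=; congr (_ + _).
rewrite (reindex_omap Some id); last by case.
by apply: eq_bigl => k /=; rewrite eqxx.
Qed.

Section LogWeightedSums.
Variables (R : realType) (d : nat).
Implicit Types (a b v : 'I_d -> R).

Lemma dotv_ln1p_lt a b v k0 :
  (forall k, 0 <= v k) -> (forall k, 0 <= a k) ->
  (forall k, v k != 0 -> a k <= b k) -> 0 < v k0 -> a k0 < b k0 ->
  dotv (fun k => ln (1 + a k)) v < dotv (fun k => ln (1 + b k)) v.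
Proof.
move=> v_ge0 a_ge0 a_le_b vk0_gt0 ab_k0.
have ln1p_le k : a k <= b k -> ln (1 + a k) <= ln (1 + b k).
  by move=> ab; rewrite ler_ln ?lerD2l // posrE ltr_wpDr // (le_trans (a_ge0 k)).
rewrite /dotv (bigD1 k0) //= [ltRHS](bigD1 k0) //=; apply: ltr_leD.
  rewrite ltr_pM2r // ltr_ln ?ltrD2l // posrE ltr_wpDr //.
  exact: le_trans (a_ge0 k0) (ltW ab_k0).
apply: ler_sum => k _; have [->|vk_neq0] := eqVneq (v k) 0; first by rewrite !mulr0.
by rewrite ler_wpM2r ?ln1p_le ?a_le_b.
Qed.

Lemma dotv_ln1p_gt0 a v k0 :
  (forall k, 0 <= v k) -> (forall k, 0 <= a k) -> 0 < v k0 -> 0 < a k0 ->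
  0 < dotv (fun k => ln (1 + a k)) v.
Proof.
move=> v_ge0 a_ge0 vk0_gt0 ak0_gt0.
rewrite /dotv (bigD1 k0) //=; apply: ltr_wpDr.
  by apply: sumr_ge0 => k _; rewrite mulr_ge0 // ln_ge0 // lerDl.
by rewrite mulr_gt0 // ln_gt0 // ltrDl.
Qed.

Lemma dotv_ln1p_eq0 a v : (forall k, v k != 0 -> a k = 0) ->
  dotv (fun k => ln (1 + a k)) v = 0.
Proof.
move=> a_supp; apply: big1 => k _.
have [->|/a_supp ->] := eqVneq (v k) 0; first by rewrite mulr0.
by rewrite addr0 ln1 mul0r.
Qed.

End LogWeightedSums.

Section SubstochasticMatrix.
Variables (R : realType) (d : nat) (P : 'M[R]_d).
Hypothesis P_ge0 : forall a b, 0 <= P a b.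
Hypothesis P_rowsum_le1 : forall a, \sum_b P a b <= 1.

Section HittingProbabilities.
Variable j : 'I_d.

Lemma hitn_None n : hitn P j n None = 0.
Proof.
elim: n => [|n IHn] //=.
by rewrite sumr_option IHn mulr0 add0r big1 // => k _; rewrite mul0r.
Qed.

Lemma hitn_target n : hitn P j n (Some j) = 1.
Proof. by case: n => [|n] /=; rewrite eqxx. Qed.

Lemma hitn0 k : k != j -> hitn P j 0 (Some k) = 0.
Proof. by move=> kj /=; rewrite inj_eq ?(negbTE kj) //; apply: Some_inj. Qed.

Lemma hitnS n k : k != j ->
  hitn P j n.+1 (Some k) = \sum_l P k l * hitn P j n (Some l).
Proof.
move=> kj /=; rewrite inj_eq ?(negbTE kj); last exact: Some_inj.
by rewrite sumr_option hitn_None mulr0 add0r.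
Qed.

Lemma hitn_ge0 n k : 0 <= hitn P j n (Some k).
Proof.
elim: n k => [|n IHn] k; have [->|kj] := eqVneq k j; rewrite ?hitn_target //.
  by rewrite hitn0.
by rewrite hitnS // sumr_ge0 // => l _; rewrite mulr_ge0.
Qed.

Lemma hitn_le1 n k : hitn P j n (Some k) <= 1.
Proof.
elim: n k => [|n IHn] k; have [->|kj] := eqVneq k j; rewrite ?hitn_target //.
  by rewrite hitn0.
rewrite hitnS //; apply: le_trans (P_rowsum_le1 k); apply: ler_sum => l _.
by rewrite ler_piMr.
Qed.

Lemma hitn_nondecreasing k : nondecreasing_seq (fun n => hitn P j n (Some k)).
Proof.
apply/nondecreasing_seqP => n; elim: n k => [|n IHn] k.
  by have [->|kj] := eqVneq k j; rewrite ?hitn_target // hitn0 // hitn_ge0.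
have [->|kj] := eqVneq k j; first by rewrite !hitn_target.
by rewrite !hitnS //; apply: ler_sum => l _; rewrite ler_wpM2l.
Qed.

Lemma hitn_cvg k : (hitn P j n (Some k) @[n --> \oo] --> Qhit P k j)%classic.
Proof.
apply: nondecreasing_is_cvgn; first exact: hitn_nondecreasing.
by exists 1 => _ [n _ <-]; rewrite hitn_le1.
Qed.

Lemma Qhit_ge0 k : 0 <= Qhit P k j.
Proof.
apply: le_trans (nondecreasing_cvgn_le (hitn_nondecreasing k) _ 0).
  exact: hitn_ge0.
exact: cvgP (hitn_cvg k).
Qed.

Lemma Qhit_le1 k : Qhit P k j <= 1.
Proof.
apply: limr_le; first exact: cvgP (hitn_cvg k).
by near=> n; rewrite hitn_le1.
Unshelve. all: end_near.
Qed.

Lemma Qhit_target : Qhit P j j = 1.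
Proof.
apply: cvg_lim => //; under eq_fun do rewrite hitn_target; exact: cvg_cst.
Qed.

Lemma Qhit_step k : k != j -> Qhit P k j = \sum_l P k l * Qhit P l j.
Proof.
move=> kj; set h := fun n => hitn P j n (Some k).
have h_to_Q : (h n.+1 @[n --> \oo] --> Qhit P k j)%classic.
  by rewrite (cvg_shiftS h); exact: hitn_cvg.
have h_to_sum : (h n.+1 @[n --> \oo] --> \sum_l P k l * Qhit P l j)%classic.
  rewrite /h; under eq_fun do rewrite hitnS //.
  apply: cvg_big => //; first exact: add_continuous.
  by move=> l _; apply: cvgMl_tmp; exact: hitn_cvg.
exact: cvg_unique h_to_Q h_to_sum.
Qed.

End HittingProbabilities.

Section ExcessiveMeasure.
Variable rho : 'I_d -> R.
Hypothesis rhoP_lt : forall i, \sum_(j < d) rho j * P j i < rho i.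

(* Summing [rhoP_lt] over the set N of negative coordinates, mass only leaves N
   under P, which is impossible if N is nonempty. *)
Lemma rho_ge0 i : 0 <= rho i.
Proof.
rewrite leNgt; apply/negP => rho_i_lt0.
set N := fun k => rho k < 0.
have sum_lt : \sum_(l | N l) \sum_j rho j * P j l < \sum_(l | N l) rho l.
  apply: ltr_sum => [|l _]; last exact: rhoP_lt.
  by apply/hasP; exists i; rewrite ?mem_index_enum.
have sum_ge : \sum_(l | N l) rho l <= \sum_(l | N l) \sum_j rho j * P j l.
  apply: (@le_trans _ _ (\sum_(l | N l) \sum_(j | N j) rho j * P j l)); last first.
    apply: ler_sum => l _; rewrite [leRHS](bigID N) /= lerDl.
    by apply: sumr_ge0 => m; rewrite /N -leNgt => rho_m_ge0; exact: mulr_ge0.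
  rewrite exchange_big /=; apply: ler_sum => l Nl.
  rewrite -mulr_sumr -[leLHS]mulr1 ler_nM2l //.
  apply: le_trans (P_rowsum_le1 l); rewrite [leRHS](bigID N) /= lerDl.
  exact: sumr_ge0.
by move: (lt_le_trans sum_lt sum_ge); rewrite ltxx.
Qed.

Lemma rho_gt0 i : 0 < rho i.
Proof.
apply: le_lt_trans (rhoP_lt i).
by apply: sumr_ge0 => j _; rewrite mulr_ge0 ?rho_ge0.
Qed.

Lemma rho_mul_P_lt m i : rho m * P m i < rho i.
Proof.
apply: le_lt_trans (rhoP_lt i); rewrite (bigD1 m) //= lerDl.
by apply: sumr_ge0 => l _; rewrite mulr_ge0 ?rho_ge0.
Qed.

(* Weighting by the positive defects [rho - rho P], the sum of [|x|] is <= 0. *)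
Lemma harmonic_eq0 (x : 'I_d -> R) :
  (forall k, x k = \sum_l P k l * x l) -> forall k, x k = 0.
Proof.
move=> x_harm.
have norm_sub k : `|x k| <= \sum_l P k l * `|x l|.
  rewrite x_harm; apply: le_trans (ler_norm_sum _ _ _) _; apply: ler_sum => l _.
  by rewrite normrM ger0_norm.
set c := fun l => rho l - \sum_k rho k * P k l.
have c_gt0 l : 0 < c l by rewrite subr_gt0.
have sum_le0 : \sum_l c l * `|x l| <= 0.
  under eq_bigr do rewrite mulrBl.
  rewrite sumrB subr_le0.
  apply: (@le_trans _ _ (\sum_k rho k * \sum_l P k l * `|x l|)).
    by apply: ler_sum => k _; rewrite ler_wpM2l ?rho_ge0.
  under eq_bigr do rewrite mulr_sumr.
  rewrite exchange_big /=; apply: ler_sum => l _; rewrite mulr_suml.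
  by apply: ler_sum => k _; rewrite mulrA.
have terms_ge0 l : true -> 0 <= c l * `|x l| by move=> _; rewrite mulr_ge0 // ltW.
move=> k; have /(psumr_eq0P terms_ge0)/(_ k isT)/eqP : \sum_l c l * `|x l| = 0.
  by apply/eqP; rewrite eq_le sum_le0 sumr_ge0 // => l _; exact: terms_ge0.
by rewrite mulf_eq0 gt_eqF //= normr_eq0 => /eqP.
Qed.

Lemma unitmx_1subP : 1%:M - P \in unitmx.
Proof.
rewrite unitmxE unitfE -det_tr; apply/negP => /det0P [v v_neq0 v_ker].
move/negP: v_neq0; apply; apply/eqP/rowP => k; rewrite mxE.
apply: harmonic_eq0 => {}k; move/rowP: v_ker => /(_ k); rewrite !mxE.
under eq_bigr do rewrite !mxE mulrBr.
rewrite sumrB (bigD1 k) //= eqxx mulr1n mulr1 big1 => [|l /negbTE]; last first.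
  by rewrite eq_sym => ->; rewrite mulr0n mulr0.
rewrite addr0 => /eqP; rewrite subr_eq0 => /eqP ->.
by apply: eq_bigr => l _; rewrite mulrC.
Qed.

Lemma Gmx_fixl k i : Gmx P k i = (k == i)%:R + \sum_l P k l * Gmx P l i.
Proof.
have := mulmxV unitmx_1subP; rewrite mulmxBl mul1mx => /matrixP /(_ k i).
by rewrite !mxE => <-; rewrite subrK.
Qed.

Lemma Gmx_fixr k i : Gmx P k i = (k == i)%:R + \sum_l Gmx P k l * P l i.
Proof.
have := mulVmx unitmx_1subP; rewrite mulmxBr mulmx1 => /matrixP /(_ k i).
by rewrite !mxE => <-; rewrite subrK.
Qed.

(* Off [i] both columns solve [x = P x]; at [i] their defects are [1 - s]
   ([s] the return probability) and [1]. *)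
Lemma Qhit_Gmx_col i : exists2 c, 0 < c & forall k, Qhit P k i = c * Gmx P k i.
Proof.
set s := \sum_l P i l * Qhit P l i.
have s_le1 : s <= 1.
  apply: le_trans (P_rowsum_le1 i); apply: ler_sum => l _.
  by rewrite ler_piMr ?Qhit_le1.
have QG k : Qhit P k i = (1 - s) * Gmx P k i.
  apply/eqP; rewrite -subr_eq0; apply/eqP; move: k; apply: harmonic_eq0 => k.
  under eq_bigr do rewrite mulrBr mulrCA.
  rewrite sumrB -mulr_sumr.
  have [->|ki] := eqVneq k i.
    by rewrite Qhit_target // (Gmx_fixl i i) eqxx mulrDr mulr1 -/s; ring.
  by rewrite Qhit_step // (Gmx_fixl k i) (negbTE ki) add0r.
exists (1 - s) => //; rewrite lt_neqAle subr_ge0 s_le1 andbT.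
apply/negP => /eqP defect0; have := QG i.
by rewrite Qhit_target -defect0 mul0r => /eqP; rewrite oner_eq0.
Qed.

Lemma Gmx_diag_gt0 i : 0 < Gmx P i i.
Proof.
have [c c_gt0 QG] := Qhit_Gmx_col i.
by rewrite -(pmulr_rgt0 _ c_gt0) -QG Qhit_target.
Qed.

Lemma Gmx_ge0 k i : 0 <= Gmx P k i.
Proof.
have [c c_gt0 QG] := Qhit_Gmx_col i.
by rewrite -(pmulr_rge0 _ c_gt0) -QG Qhit_ge0.
Qed.

Lemma Qhit_mul_Gmx k i : Qhit P k i * Gmx P i i = Gmx P k i.
Proof.
have [c c_gt0 QG] := Qhit_Gmx_col i.
have cG : c * Gmx P i i = 1 by rewrite -QG Qhit_target.
by rewrite QG mulrAC cG mul1r.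
Qed.

Lemma Gmx_branch m i k : branching P -> 0 < P m i -> k != i ->
  Gmx P k i = Gmx P k m * P m i.
Proof.
move=> branchP Pmi_gt0 ki.
rewrite Gmx_fixr (negbTE ki) add0r (bigD1 m) //= big1 ?addr0 // => l lm.
suff -> : P l i = 0 by rewrite mulr0.
apply/eqP; rewrite eq_le P_ge0 andbT leNgt; apply/negP => Pli_gt0.
by move/eqP: lm; apply; exact: branchP Pli_gt0 Pmi_gt0.
Qed.

Lemma Gmx_unreached k i : k != i ->
  (forall l, 0 < P l i -> Gmx P k l = 0) -> Gmx P k i = 0.
Proof.
move=> ki G_pred0; rewrite Gmx_fixr (negbTE ki) add0r big1 // => l _.
have [/G_pred0 ->|Pli_le0] := ltrP 0 (P l i); first by rewrite mul0r.
suff -> : P l i = 0 by rewrite mulr0.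
by apply/eqP; rewrite eq_le Pli_le0 P_ge0.
Qed.

Section GammaVectors.
Variable eps : R.
Hypothesis eps_gt0 : 0 < eps.

Local Notation gam := (fun i => eps * Gmx P i i / rho i).

Lemma garrow_Gmx j : garrow P gam j = fun k => ln (1 + eps * Gmx P k j / rho j).
Proof.
by apply/funext => k; rewrite /garrow -(Qhit_mul_Gmx k j); congr (ln (1 + _)); ring.
Qed.

Lemma Gmx_div_rho_ge0 j k : 0 <= eps * Gmx P k j / rho j.
Proof. by rewrite divr_ge0 ?mulr_ge0 ?Gmx_ge0 // ltW ?rho_gt0. Qed.

Lemma dotv_garrow_lt_parent i m v k1 : branching P -> 0 < P m i ->
  (forall k, 0 <= v k) -> v i = 0 -> 0 < v k1 -> 0 < Gmx P k1 m ->
  dotv (garrow P gam i) v < dotv (garrow P gam m) v.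
Proof.
move=> branchP Pmi_gt0 v_ge0 vi0 vk1_gt0 Gk1m_gt0.
have ratio_lt : P m i / rho i < (rho m)^-1.
  rewrite -(ltr_pM2l (rho_gt0 m)) mulfV ?gt_eqF ?rho_gt0 // mulrA.
  by rewrite ltr_pdivrMr ?rho_gt0 // mul1r rho_mul_P_lt.
have entry k : k != i ->
  eps * Gmx P k i / rho i = eps * Gmx P k m * (P m i / rho i).
  by move=> ki; rewrite (Gmx_branch _ _ _ branchP Pmi_gt0 ki) !mulrA.
have neq_i k : v k != 0 -> k != i by apply: contra_neq => ->; rewrite vi0.
rewrite !garrow_Gmx; apply: (@dotv_ln1p_lt _ _ _ _ _ k1) => // [k|k vk|].
- exact: Gmx_div_rho_ge0.
- by rewrite entry ?neq_i // ler_wpM2l ?mulr_ge0 ?Gmx_ge0 ?ltW.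
- by rewrite entry ?neq_i ?gt_eqF // ltr_pM2l ?mulr_gt0.
Qed.

Lemma dotv_garrow_lt_unreached i k0 v :
  (forall k, 0 <= v k) -> v i = 0 -> 0 < v k0 ->
  (forall l k, 0 < P l i -> 0 < v k -> Gmx P k l = 0) ->
  dotv (garrow P gam i) v < dotv (garrow P gam k0) v.
Proof.
move=> v_ge0 vi0 vk0_gt0 unreached.
have v_gt0 k : v k != 0 -> 0 < v k by rewrite lt_neqAle eq_sym v_ge0 andbT.
rewrite !garrow_Gmx dotv_ln1p_eq0 => [|k vk]; last first.
  have ki : k != i by apply: contra_neq vk => ->.
  by rewrite Gmx_unreached ?mulr0 ?mul0r // => l /unreached; apply; exact: v_gt0.
apply: (@dotv_ln1p_gt0 _ _ _ _ k0) => // [k|]; first exact: Gmx_div_rho_ge0.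
by rewrite divr_gt0 ?mulr_gt0 ?Gmx_diag_gt0 ?rho_gt0.
Qed.

Lemma garrow_dominated i v : branching P ->
  (forall k, 0 <= v k) -> (exists k, v k != 0) -> v i = 0 ->
  exists j, dotv (garrow P gam i) v < dotv (garrow P gam j) v.
Proof.
move=> branchP v_ge0 [k0 vk0_neq0] vi0.
have vk0_gt0 : 0 < v k0 by rewrite lt_neqAle eq_sym vk0_neq0 v_ge0.
have [[m [k [Pmi_gt0 [vk_gt0 Gkm_gt0]]]]|no_parent_path] :=
  pselect (exists m k, 0 < P m i /\ 0 < v k /\ 0 < Gmx P k m).
  by exists m; apply: (dotv_garrow_lt_parent _ _ _ k).
exists k0; apply: dotv_garrow_lt_unreached => // l k Pli_gt0 vk_gt0.
apply/eqP; rewrite eq_le Gmx_ge0 andbT leNgt; apply/negP => Gkl_gt0.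
by apply: no_parent_path; exists l, k.
Qed.

End GammaVectors.
End ExcessiveMeasure.
End SubstochasticMatrix.

Theorem proposition3p1 (R : realType) (d : nat)
  (lam mu : 'I_d -> R) (P : 'M[R]_d) :
  jackson_data lam mu P -> hypA lam mu P -> hypB lam mu P -> branching P ->
  forall (eps : R) (rho : 'I_d -> R), 0 < eps ->
  (forall i, \sum_(j < d) rho j * P j i < rho i) ->
  Gamma_set P (fun i => eps * Gmx P i i / rho i).
Proof.
move=> [_ [_ [P_ge0 [_ P_rowsum_le1]]]] _ _ branchP eps rho eps_gt0 rhoP_lt.
split=> [i|i v v_ge0 v_neq0 vi0]; first exact: Gmx_div_rho_ge0.
have [j lt_ij] := garrow_dominated R d P P_ge0 P_rowsum_le1 rho rhoP_lt eps
  eps_gt0 i v branchP v_ge0 v_neq0 vi0.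
exact: lt_le_trans lt_ij (le_bigmax _ _ j).
Qed.
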